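(* Let $K$ be a field of characteristic zero, $x=(x_1,\dots,x_n)$, and let $f,h\in K[x]$ with $\deg(f-h)=1$. If there exists a vector $v\in K^n$ such that $\mathcal{J}h\cdot v=0\neq\mathcal{J}f\cdot v$, then $f$ is a tame coordinate.
   Context: $\mathcal{J}h=(\partial h/\partial x_1,\dots,\partial h/\partial x_n)$ is the Jacobian (row vector). A polynomial $f$ is a tame coordinate if it is a component of a tame automorphism, i.e. of an invertible polynomial map that is a composition of invertible linear (affine) maps and elementary maps $(x_1+p(x_2,\dots,x_n),x_2,\dots,x_n)$. *)

From HB Require Import structures.
From mathcomp Require Import all_boot all_order all_algebra.
From mathcomp Require Import mpoly.
Set Implicit Arguments. Unset Strict Implicit. Unset Printing Implicit Defensive.
Import GRing.Theory.
Local Open Scope ring_scope.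

Definition polymap (K : fieldType) (n : nat) := n.-tuple {mpoly K[n]}.

Definition pm_id (K : fieldType) (n : nat) : polymap K n :=
  [tuple 'X_i | i < n].

Definition pm_comp (K : fieldType) (n : nat) (F G : polymap K n) : polymap K n :=
  [tuple (tnth F j) \mPo G | j < n].

Definition affine_auto (K : fieldType) (n : nat) (F : polymap K n) : Prop :=
  exists (A : 'M[K]_n) (b : 'I_n -> K), A \in unitmx /\
    forall j : 'I_n, tnth F j = \sum_(k < n) A j k *: 'X_k + (b j)%:MP.

(* elementary maps (x_1 + p(x_2,...,x_n), x_2, ..., x_n) *)
Definition elementary_map (K : fieldType) (n : nat) (F : polymap K n) : Prop :=
  exists (i0 : 'I_n) (p : {mpoly K[n]}),
    val i0 = 0%N /\
    (forall m, m \in msupp p -> m i0 = 0%N) /\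
    tnth F i0 = 'X_i0 + p /\
    (forall j : 'I_n, j != i0 -> tnth F j = 'X_j).

Definition tame_auto (K : fieldType) (n : nat) (F : polymap K n) : Prop :=
  exists s : seq (polymap K n),
    (forall G, G \in s -> affine_auto G \/ elementary_map G) /\
    F = foldr (@pm_comp K n) (pm_id K n) s.

Definition tame_coordinate (K : fieldType) (n : nat) (f : {mpoly K[n]}) : Prop :=
  exists (F : polymap K n) (i : 'I_n), tame_auto F /\ tnth F i = f.

Definition tdeg (K : fieldType) (n : nat) (p : {mpoly K[n]}) : nat := (msize p).-1.

(* Jacobian (row vector) times column vector v *)
Definition jac_mul (K : fieldType) (n : nat) (h : {mpoly K[n]}) (v : 'cV[K]_n)
  : {mpoly K[n]} := \sum_(i < n) v i 0 *: h^`M(i).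

From HB Require Import structures.
From mathcomp Require Import all_boot all_order all_algebra.
From mathcomp Require Import mpoly.
From mathcomp Require Import perm ring.
Set Implicit Arguments. Unset Strict Implicit. Unset Printing Implicit Defensive.
Import GRing.Theory.
Local Open Scope ring_scope.

(* Since [deg (f - h) = 1], the derivative [Jf v = J(f - h) v] is a nonzero
   constant [c]; rescale [v] so that [c = 1] and take an invertible matrix [A]
   with first column [v].  Then [g := f(A x)] satisfies [dg/dx_0 = (Jf v)(A x)
   = 1], so in characteristic zero [g = x_0 + r] with [r] free of [x_0]: [g] is
   the first component of an elementary map, and [f = g(A^-1 x)] is a tame
   coordinate. *)

Section MPolyCalculus.
Variables (K : fieldType) (n : nat).
Implicit Types (p : {mpoly K[n]}) (G H : n.-tuple {mpoly K[n]}).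

Lemma comp_mpolyA p G H :
  (p \mPo G) \mPo H = p \mPo [tuple tnth G i \mPo H | i < n].
Proof.
rewrite [p \mPo G]comp_mpolyEX [RHS]comp_mpolyEX raddf_sum /=.
apply: eq_bigr => m _; rewrite !comp_mpolyZ !comp_mpolyX rmorph_prod /=.
by congr (_ *: _); apply: eq_bigr => i _; rewrite rmorphXn /= tnth_mktuple.
Qed.

Lemma mderivXU (k j : 'I_n) : ('X_k : {mpoly K[n]})^`M(j) = (k == j)%:R%:MP.
Proof.
rewrite mderivX mnm1E; case: eqP => [->|_]; last by rewrite scale0r mpolyC0.
have -> : (U_(j) - U_(j) = 0 :> 'X_{1..n})%MM.
  by apply/mnmP => l; rewrite mnmBE subnn mnm0E.
by rewrite mpolyX0 scale1r mpolyC1.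
Qed.

Lemma mderiv_comp G p j :
  (p \mPo G)^`M(j) = \sum_i (p^`M(i) \mPo G) * (tnth G i)^`M(j).
Proof.
pose chain q := forall j, (q \mPo G)^`M(j)
  = \sum_i (q^`M(i) \mPo G) * (tnth G i)^`M(j).
have chain1 : chain 1.
  move=> k; rewrite comp_mpoly1 -mpolyC1 mderivC big1 // => i _.
  by rewrite mderivC comp_mpoly0 mul0r.
have chainD q1 q2 : chain q1 -> chain q2 -> chain (q1 + q2).
  move=> h1 h2 k; rewrite raddfD mderivD h1 h2 -big_split.
  by apply: eq_bigr => i _; rewrite mderivD raddfD mulrDl.
have chainZ c q : chain q -> chain (c *: q).
  move=> hq k; rewrite comp_mpolyZ mderivZ hq scaler_sumr.
  by apply: eq_bigr => i _; rewrite mderivZ comp_mpolyZ scalerAl.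
have chainM q1 q2 : chain q1 -> chain q2 -> chain (q1 * q2).
  move=> h1 h2 k; rewrite rmorphM mderivM h1 h2 mulr_suml mulr_sumr -big_split.
  by apply: eq_bigr => i _; rewrite mderivM rmorphD !rmorphM /=; ring.
have chainX i : chain 'X_i.
  move=> k; rewrite comp_mpolyXU -tnth_nth (bigD1 i) //= big1 => [|l li].
    by rewrite mderivXU eqxx mpolyC1 comp_mpoly1 mul1r addr0.
  by rewrite mderivXU eq_sym (negbTE li) mpolyC0 comp_mpoly0 mul0r.
suff : chain p by apply.
elim/mpolyind: p => [|c m q _ _ hq]; first by rewrite -(scale0r 1); apply: chainZ.
apply: chainD => //; apply: chainZ; rewrite mpolyXE_id.
apply: (big_ind chain) => // i _; elim: (m i) => [|k IH]; first by rewrite expr0.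
by rewrite exprS; apply: chainM.
Qed.

Lemma mderiv_msize_le2 p i : (msize p <= 2)%N -> p^`M(i) = (p@_U_(i)%MM)%:MP.
Proof.
move=> hp; apply/mpolyP => m; rewrite mcoeff_mderiv mcoeffC.
have [->|m0] := eqVneq m 0%MM; first by rewrite add0m mnm0E mulr1.
suff /memN_msupp_eq0 -> : (m + U_(i))%MM \notin msupp p by rewrite mul0rn mulr0.
apply: msize_mdeg_ge; apply: leq_trans hp _.
by rewrite mdegD mdeg1 addn1 ltnS lt0n mdeg_eq0.
Qed.

Lemma jac_mul_msize_le2 p (v : 'cV[K]_n) : (msize p <= 2)%N ->
  jac_mul p v = (\sum_i v i 0 * p@_U_(i)%MM)%:MP.
Proof.
move=> hp; rewrite /jac_mul raddf_sum /=; apply: eq_bigr => i _.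
by rewrite mderiv_msize_le2 // mpolyCM mul_mpolyC.
Qed.

Lemma jac_mulB p q v : jac_mul (p - q) v = jac_mul p v - jac_mul q v.
Proof.
by rewrite /jac_mul -sumrB; apply: eq_bigr => i _; rewrite mderivB scalerBr.
Qed.

Lemma jac_mulZ p c v : jac_mul p (c *: v) = c *: jac_mul p v.
Proof.
by rewrite /jac_mul scaler_sumr; apply: eq_bigr => i _; rewrite mxE scalerA.
Qed.

Lemma msupp_mderiv_eq0 p i (m : 'X_{1..n}) : [pchar K] =i pred0 ->
  p^`M(i) = 0 -> m \in msupp p -> m i = 0%N.
Proof.
move=> ch0 dp; apply: contraTeq; rewrite -lt0n => mi_gt0.
have em : m = (m - U_(i) + U_(i))%MM.
  apply/mnmP => l; rewrite mnmDE mnmBE mnm1E.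
  by case: eqP => [<-|_]; [rewrite subnK | rewrite subn0 addn0].
have := mcoeff_mderiv i p (m - U_(i))%MM; rewrite dp mcoeff0 -em.
move/esym/eqP; rewrite -mulr_natr mulf_eq0 (iffLR (pcharf0P K) ch0) orbF => /eqP pm0.
by rewrite mcoeff_msupp pm0 eqxx.
Qed.

End MPolyCalculus.

Section LinearSubstitution.
Variables (K : fieldType) (n : nat).
Implicit Types (p : {mpoly K[n]}) (A B : 'M[K]_n).

Definition linmap A : polymap K n := [tuple \sum_(k < n) A i k *: 'X_k | i < n].

Lemma mderiv_linmap A i j : (tnth (linmap A) i)^`M(j) = (A i j)%:MP.
Proof.
rewrite tnth_mktuple raddf_sum (bigD1 j) //= big1 => [|k kj].
  by rewrite mderivZ mderivXU eqxx mpolyC1 -alg_mpolyC addr0.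
by rewrite mderivZ mderivXU (negbTE kj) mpolyC0 scaler0.
Qed.

Lemma mderiv_comp_linmap A p j :
  (p \mPo linmap A)^`M(j) = jac_mul p (col j A) \mPo linmap A.
Proof.
rewrite mderiv_comp /jac_mul raddf_sum; apply: eq_bigr => i _ /=.
by rewrite mderiv_linmap mxE comp_mpolyZ mulrC mul_mpolyC.
Qed.

Lemma comp_linmapM A B p :
  (p \mPo linmap A) \mPo linmap B = p \mPo linmap (A *m B).
Proof.
rewrite comp_mpolyA; congr (p \mPo _); apply: eq_from_tnth => i.
rewrite !tnth_mktuple raddf_sum /=.
under eq_bigr do rewrite comp_mpolyZ comp_mpolyXU -tnth_nth tnth_mktuple scaler_sumr.
rewrite exchange_big /=; apply: eq_bigr => l _.
by rewrite mxE scaler_suml; apply: eq_bigr => k _; rewrite scalerA.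
Qed.

Lemma linmap1 : linmap 1%:M = pm_id K n.
Proof.
apply: eq_from_tnth => i; rewrite !tnth_mktuple (bigD1 i) //= big1 => [|k ki].
  by rewrite mxE eqxx scale1r addr0.
by rewrite mxE eq_sym (negbTE ki) scale0r.
Qed.

Lemma comp_linmapK A p : A \in unitmx ->
  (p \mPo linmap A) \mPo linmap (invmx A) = p.
Proof. by move=> uA; rewrite comp_linmapM mulmxV // linmap1 comp_mpoly_id. Qed.

Lemma affine_auto_linmap A : A \in unitmx -> affine_auto (linmap A).
Proof.
move=> uA; exists A, (fun _ => 0); split=> // j.
by rewrite tnth_mktuple mpolyC0 addr0.
Qed.

End LinearSubstitution.

Lemma exists_unitmx_col0 (K : fieldType) (n : nat) (w : 'cV[K]_n.+1) :
  w != 0 -> exists2 A : 'M[K]_n.+1, A \in unitmx & col 0 A = w.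
Proof.
move=> w0; have /existsP [k wk0] : [exists k, w k 0 != 0].
  apply: contraR w0 => /existsPn wz; apply/eqP/matrixP => i j.
  by rewrite (ord1 j) mxE; apply/eqP/negPn/wz.
pose M := \matrix_(i, j) if j == k then w i 0 else (i == j)%:R.
have detM : \det M = w k 0.
  rewrite (expand_det_row _ k) (bigD1 k) //= big1 => [|j jk]; last first.
    by rewrite mxE (negbTE jk) eq_sym (negbTE jk) mul0r.
  rewrite addr0 mxE eqxx /cofactor addnn -mul2n mulnC exprM sqrr_sign mul1r.
  rewrite -[RHS]mulr1 -(det1 K n); congr (_ * \det _); apply/matrixP => i j.
  by rewrite !mxE eq_sym (negbTE (neq_lift k j)) (inj_eq (@lift_inj _ k)).
exists (col_perm (tperm 0 k) M).
  by rewrite col_permE unitmx_mul unitmx_perm unitmxE detM unitfE wk0.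
by apply/matrixP => i j; rewrite (ord1 j) !mxE tpermL eqxx.
Qed.

Section Tame.
Variables (K : fieldType) (n : nat).

Definition shear (r : {mpoly K[n.+1]}) : polymap K n.+1 :=
  [tuple if j == 0 then 'X_j + r else 'X_j | j < n.+1].

Lemma elementary_map_shear r :
  (forall m, m \in msupp r -> m 0 = 0%N) -> elementary_map (shear r).
Proof.
move=> r_free; exists 0, r; do !split => //; first by rewrite tnth_mktuple.
by move=> j /negbTE j0; rewrite tnth_mktuple j0.
Qed.

Lemma tame_coordinate_shear_comp (A : 'M[K]_n.+1) r :
  A \in unitmx -> (forall m, m \in msupp r -> m 0 = 0%N) ->
  tame_coordinate (('X_0 + r) \mPo linmap A).
Proof.
move=> uA r_free; exists (pm_comp (shear r) (pm_comp (linmap A) (pm_id K n.+1))), 0.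
split; last first.
  rewrite tnth_mktuple tnth_mktuple; congr (_ \mPo _).
  by apply: eq_from_tnth => j; rewrite tnth_mktuple comp_mpoly_id.
exists [:: shear r; linmap A]; split=> // G; rewrite !inE => /orP [/eqP->|/eqP->].
  by right; apply: elementary_map_shear.
by left; apply: affine_auto_linmap.
Qed.

End Tame.

Theorem proposition5p6 (K : fieldType) (n : nat) (f h : {mpoly K[n]}) :
  [pchar K] =i pred0 ->
  tdeg (f - h) = 1%N ->
  (exists v : 'cV[K]_n, jac_mul h v = 0 /\ jac_mul f v != 0) ->
  tame_coordinate f.
Proof.
case: n f h => [|n] f h ch0 hdeg [v [hv hfv]].
  by rewrite /jac_mul big_ord0 eqxx in hfv.
have hsize : (msize (f - h) <= 2)%N.
  by move: hdeg; rewrite /tdeg; case: (msize _) => [|[|[]]].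
set c := \sum_i v i 0 * (f - h)@_U_(i)%MM.
have jfv : jac_mul f v = c%:MP by rewrite -jac_mul_msize_le2 // jac_mulB hv subr0.
have c0 : c != 0 by rewrite -(mpolyC_eq0 n.+1) -jfv.
have v0 : v != 0.
  by apply: contraNneq hfv => ->; rewrite /jac_mul big1 // => i _; rewrite mxE scale0r.
have [A uA colA] : exists2 A, A \in unitmx & col 0 A = c^-1 *: v.
  by apply: exists_unitmx_col0; rewrite scaler_eq0 negb_or invr_eq0 c0.
set g := f \mPo linmap A.
have dg : g^`M(0) = 1.
  by rewrite mderiv_comp_linmap colA jac_mulZ jfv -mul_mpolyC -mpolyCM mulVf // comp_mpolyC.
have r_free m : m \in msupp (g - 'X_0) -> m 0 = 0%N.
  by apply: msupp_mderiv_eq0 => //; rewrite mderivB dg mderivXU eqxx mpolyC1 subrr.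
rewrite -(comp_linmapK f uA) -/g -[g](subrK 'X_0) addrC.
by apply: tame_coordinate_shear_comp; rewrite ?unitmx_inv.
Qed.
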